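(* Let $p$ be a prime, $m\ge1$ an integer ($m\ge2$ if $p=2$), $\gamma$ a primitive element of $\mathbb F_{p^m}$, $n\ge2$ a divisor of $p^m-1$, and $s=(p^m-1)/n$. Let $\mathcal A_1=\{\gamma^{nt}:t\in\mathbb Z\}$ and $\mathcal A_k=\gamma^{k-1}\mathcal A_1$ for $1\le k\le n$. Writing each $\beta\in\mathbb F_{p^m}$ as $\beta=\sum_{i=1}^m b_i\gamma^{i-1}$ with $b_i\in\{0,\dots,p-1\}$, let $q_k(x_1,\dots,x_m)=\sum_{\beta\in\mathcal A_k}\prod_{i=1}^m x_i^{b_i}$ for $1\le k\le n$ and $q_0=1$, and let $\mathbf V_{n+1}$ be the $\mathbb Q$-span of $q_0,\dots,q_n$ in $R=\mathbb Q[x_1,\dots,x_m]/\langle x_1^p-1,\dots,x_m^p-1\rangle$. Then $\mathbf V_{n+1}$ is a $\mathbb Q$-subalgebra of $R$; in particular, for all $1\le i,j\le n$ there are integers $c_{ijk}$ ($0\le k\le n$) with $$q_iq_j \bmod \langle x_1^p-1,\dots,x_m^p-1\rangle = c_{ij0}+\sum_{k=1}^n c_{ijk}q_k.$$ Moreover: (a) if $p$ is odd and $s$ is even, then $c_{ii0}=s$ and $c_{ij0}=0$ for all $j\ne i$; if $p$ is odd and $s$ is odd, then $c_{ii0}=0$ and $c_{ij0}=s$ for a suitable $j\ne i$; (b) if $p=2$ (in which case $s$ is always odd), then $c_{ii0}=s$ and $c_{ij0}=0$ for all $j\ne i$.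
   Context: The $\mathcal A_k$ are the fibers of the multiplicative character of order $n$ on $\mathbb F_{p^m}^*$ sending $\gamma\mapsto e^{2\pi i/n}$; $q_k$ is the multivariate characteristic polynomial of $\mathcal A_k$ and $q_0=1$ is that of $\{0\}$. *)

From HB Require Import structures.
From mathcomp Require Import all_boot all_order all_algebra all_field.
From mathcomp Require Import mpoly.
From Stdlib Require Import ClassicalEpsilon.
Set Implicit Arguments. Unset Strict Implicit. Unset Printing Implicit Defensive.
Import GRing.Theory.
Local Open Scope ring_scope.

Definition pbool (P : Prop) : bool :=
  if excluded_middle_informative P then true else false.

Section Defs.
Variables (F : finFieldType) (p m : nat) (gamma : F) (n : nat).

Definition A1 : {set F} :=
  [set x : F | pbool (exists t : int, x = gamma ^ ((n%:Z) * t)%R)].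
Definition Ak (k : nat) : {set F} := [set gamma ^+ k.-1 * a | a in A1].

(* coordinates: beta = sum_{i<m} b_i gamma^i with b_i in {0,...,p-1}
   (the b_i are unique when gamma is primitive; default 0 otherwise) *)
Definition coord (beta : F) (i : 'I_m) : nat :=
  match [pick b : {ffun 'I_m -> 'I_p} |
           beta == \sum_(j < m) (b j : nat)%:R * gamma ^+ j] with
  | Some b => b i
  | None => 0%N
  end.

Definition monom (beta : F) : {mpoly rat[m]} :=
  \prod_(i < m) 'X_i ^+ coord beta i.

Definition q (k : nat) : {mpoly rat[m]} :=
  if k == 0%N then 1 else \sum_(beta in Ak k) monom beta.

Definition eqmodI (f g : {mpoly rat[m]}) : Prop :=
  exists h : 'I_m -> {mpoly rat[m]},
    f - g = \sum_(i < m) h i * ('X_i ^+ p - 1).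

Definition inV (f : {mpoly rat[m]}) : Prop :=
  exists a : nat -> rat, eqmodI f (\sum_(k < n.+1) a k *: q k).
End Defs.

(* Writing beta = sum_i b_i gamma^(i-1), the coordinates b_i are additive modulo p: the
   coordinate map F_p^m -> F is injective because a nonzero polynomial over F_p of degree
   < m cannot vanish at the m distinct conjugates gamma^(p^k). Hence, modulo the ideal,
   monomials multiply like the field elements add, and q_i q_j is the sum over x of
   N_ij(x) x^b(x), where N_ij(x) counts the a in A_i with x - a in A_j. Multiplication by
   A_1 permutes every class, so N_ij is constant on each A_k: these values are the
   structure constants. The constant term N_ij(0) counts the a in A_i with -a in A_j, so it
   is s when -A_i = A_j and 0 otherwise; and -1, which is gamma^((p^m-1)/2) for odd p and
   1 for p = 2, lies in A_1 unless p is odd and s is odd, in which case -A_i is the class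
   A_(i + n/2). *)

From Pilot Require Import Defs.
From HB Require Import structures.
From mathcomp Require Import all_boot all_order all_algebra all_field.
From mathcomp Require Import mpoly.
From mathcomp Require Import zify.
From Stdlib Require Import ClassicalEpsilon.
Set Implicit Arguments. Unset Strict Implicit. Unset Printing Implicit Defensive.
Import GRing.Theory.
Local Open Scope ring_scope.

Section IdealCongruence.
Variables (p m : nat).
Local Notation eqmod := (@eqmodI p m).

Lemma eqmodI_refl f : eqmod f f.
Proof. by exists (fun=> 0); rewrite subrr big1 // => i _; rewrite mul0r. Qed.

Lemma eqmodI_eq f g : f = g -> eqmod f g.
Proof. by move->; apply: eqmodI_refl. Qed.

Lemma eqmodI_trans f g h : eqmod f g -> eqmod g h -> eqmod f h.
Proof.
case=> u Eu [v Ev]; exists (fun i => u i + v i).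
rewrite -[f](subrK g) -addrA Eu Ev -big_split.
by apply: eq_bigr => i _; rewrite mulrDl.
Qed.

Lemma eqmodID f1 g1 f2 g2 :
  eqmod f1 g1 -> eqmod f2 g2 -> eqmod (f1 + f2) (g1 + g2).
Proof.
case=> u Eu [v Ev]; exists (fun i => u i + v i).
rewrite opprD addrACA Eu Ev -big_split.
by apply: eq_bigr => i _; rewrite mulrDl.
Qed.

Lemma eqmodIM f1 g1 f2 g2 :
  eqmod f1 g1 -> eqmod f2 g2 -> eqmod (f1 * f2) (g1 * g2).
Proof.
case=> u Eu [v Ev]; exists (fun i => f1 * v i + u i * g2).
have -> : f1 * f2 - g1 * g2 = f1 * (f2 - g2) + (f1 - g1) * g2.
  by rewrite mulrBr mulrBl addrA subrK.
rewrite Eu Ev mulr_sumr mulr_suml -big_split; apply: eq_bigr => i _ /=.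
by rewrite mulrDl mulrA; congr (_ + _); apply: mulrAC.
Qed.

Lemma eqmodIZ (c : rat) f g : eqmod f g -> eqmod (c *: f) (c *: g).
Proof.
case=> u Eu; exists (fun i => c *: u i).
by rewrite -scalerBr Eu scaler_sumr; apply: eq_bigr => i _; rewrite scalerAl.
Qed.

Lemma eqmodI_sum (I : Type) (r : seq I) (P : pred I) (f g : I -> {mpoly rat[m]}) :
  (forall i, P i -> eqmod (f i) (g i)) ->
  eqmod (\sum_(i <- r | P i) f i) (\sum_(i <- r | P i) g i).
Proof. by apply: big_ind2 => //; [apply: eqmodI_refl | apply: eqmodID]. Qed.

Lemma eqmodI_prod (I : Type) (r : seq I) (P : pred I) (f g : I -> {mpoly rat[m]}) :
  (forall i, P i -> eqmod (f i) (g i)) ->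
  eqmod (\prod_(i <- r | P i) f i) (\prod_(i <- r | P i) g i).
Proof. by apply: big_ind2 => //; [apply: eqmodI_refl | apply: eqmodIM]. Qed.

Lemma eqmodI_expX_modn (i : 'I_m) k : eqmod ('X_i ^+ k) ('X_i ^+ (k %% p)).
Proof.
pose Y := 'X_i ^+ p : {mpoly rat[m]}.
exists (fun j => if j == i then 'X_i ^+ (k %% p) * \sum_(t < k %/ p) Y ^+ t else 0).
rewrite (bigD1 i) //= eqxx [X in _ = _ + X]big1 ?addr0 => [|j /negbTE ->]; last first.
  by rewrite mul0r.
have -> : 'X_i ^+ k = 'X_i ^+ (k %% p) * Y ^+ (k %/ p).
  by rewrite -exprM -exprD mulnC addnC -divn_eq.
by rewrite -mulrA [_ * (_ - 1)]mulrC -subrX1 mulrBr mulr1.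
Qed.

End IdealCongruence.

Lemma natr_inj_pchar (R : nzRingType) p u v :
  p \in [pchar R] -> (u < p)%N -> (v < p)%N -> u%:R = v%:R :> R -> u = v.
Proof.
move=> chR; wlog le_uv : u v / (u <= v)%N => [W up vp E|up vp E].
  by case: (leqP u v) => [|/ltnW] h; [apply: W | apply/esym/W].
have : (p %| v - u)%N by rewrite (dvdn_pcharf chR) natrB // E subrr.
by case: (posnP (v - u)) => [|/dvdn_leq H /H]; lia.
Qed.

Section Coordinates.
Variables (F : finFieldType) (p m : nat) (gamma : F).
Hypotheses (chF : p \in [pchar F]) (cardF : #|F| = (p ^ m)%N).
Hypotheses (gamma_prim : #|F|.-1.-primitive_root gamma) (order_gt1 : (1 < #|F|.-1)%N).

Local Notation coord := (@Defs.coord F p m gamma).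

Definition expand (b : {ffun 'I_m -> 'I_p}) : F :=
  \sum_(j < m) (b j : nat)%:R * gamma ^+ j.

Lemma frobenius_orbit_uniq : uniq [seq gamma ^+ (p ^ k) | k <- iota 0 m].
Proof.
have p_gt1 : (1 < p)%N := prime_gt1 (pcharf_prime chF).
have pk_lt k : (k < m)%N -> (p ^ k < #|F|.-1)%N.
  move=> lt_km; have le_pk : (p ^ k <= p ^ m.-1)%N by rewrite leq_exp2l //; lia.
  have pm : (p ^ m = p * p ^ m.-1)%N by rewrite -expnS prednK //; lia.
  have : (0 < p ^ m.-1)%N by rewrite expn_gt0; lia.
  move: order_gt1; rewrite cardF pm; nia.
rewrite map_inj_in_uniq ?iota_uniq // => k l; rewrite !mem_iota /= => lt_km lt_lm.
move/eqP; rewrite (eq_prim_root_expr gamma_prim) !modn_small ?pk_lt //.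
by rewrite eqn_exp2l // => /eqP.
Qed.

Lemma expand_inj : injective expand.
Proof.
move=> b b' Ebb'; apply/ffunP => j0; apply: val_inj.
apply: (natr_inj_pchar chF (ltn_ord _) (ltn_ord _)).
apply/eqP; rewrite -subr_eq0; apply: contraT => neq.
pose P : {poly F} := \sum_(j < m) ((b j : nat)%:R - (b' j : nat)%:R) *: 'X^j.
have P_frob : map_poly (pFrobenius_aut chF) P = P.
  apply/polyP => k; rewrite coef_map /= !coef_sumMXn rmorph_sum.
  by apply: eq_bigr => j _; rewrite rmorphB !rmorph_nat.
have P_root k : root P (gamma ^+ (p ^ k)).
  apply/eqP; elim: k => [|k IH].
    rewrite expr1 horner_sum; transitivity (expand b - expand b'); last first.
      by rewrite Ebb' subrr.
    rewrite -sumrB; apply: eq_bigr => j _.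
    by rewrite hornerZ hornerXn mulrBl.
  by rewrite expnSr exprM -(pFrobenius_autE chF) -{1}P_frob horner_map IH rmorph0.
have P_neq0 : P != 0.
  apply: contraNneq neq => /(congr1 (coefp j0)) /=.
  by rewrite coef_sumMXn (big_pred1 j0) ?coef0 // => ->.
have P_size : (size P <= m)%N.
  apply: leq_trans (size_sum _ _ _) _; apply/bigmax_leqP => j _.
  by apply: leq_trans (size_scale_leq _ _) _; rewrite size_polyXn.
have := max_poly_roots P_neq0 _ frobenius_orbit_uniq.
rewrite size_map size_iota => /(_ _)/leq_trans/(_ P_size); rewrite ltnn; apply.
by apply/allP => x /mapP [k _ ->]; apply: P_root.
Qed.

Lemma expand_surj beta : exists b, expand b = beta.
Proof.
have : beta \in codom expand.
  by apply: (inj_card_onto expand_inj); rewrite card_ffun !card_ord cardF.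
by case/codomP => b ->; exists b.
Qed.

Lemma coord_expand b i : coord (expand b) i = b i.
Proof.
rewrite /Defs.coord; case: pickP => [b' /eqP Eb'|/(_ b)]; last by rewrite eqxx.
by rewrite (expand_inj (esym Eb')).
Qed.

Lemma coordD beta beta' i : coord (beta + beta') i = ((coord beta i + coord beta' i) %% p)%N.
Proof.
have [[b <-] [b' <-]] := (expand_surj beta, expand_surj beta').
have p_gt0 : (0 < p)%N := prime_gt0 (pcharf_prime chF).
pose bb' : {ffun 'I_m -> 'I_p} := [ffun j => Ordinal (ltn_pmod (b j + b' j) p_gt0)].
suff -> : expand b + expand b' = expand bb' by rewrite !coord_expand ffunE.
rewrite /expand -big_split; apply: eq_bigr => j _ /=.
by rewrite ffunE /= (GRing.natr_mod_pchar chF) natrD mulrDl.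
Qed.

Lemma coord0 i : coord 0 i = 0%N.
Proof.
have p_gt0 : (0 < p)%N := prime_gt0 (pcharf_prime chF).
suff -> : 0 = expand [ffun=> Ordinal p_gt0] by rewrite coord_expand ffunE.
by rewrite /expand big1 // => j _; rewrite ffunE mul0r.
Qed.

Local Notation monom := (monom p m gamma).

Lemma monomD beta beta' : eqmodI p (monom beta * monom beta') (monom (beta + beta')).
Proof.
rewrite /monom -big_split /=; apply: eqmodI_prod => i _.
rewrite -exprD coordD; exact: eqmodI_expX_modn.
Qed.

Lemma monom0 : monom 0 = 1.
Proof. by rewrite /monom big1 // => i _; rewrite coord0 expr0. Qed.

End Coordinates.

Lemma half_mulnE n s : ~~ odd (n * s) -> ((n * s)./2 = s./2 * n + odd s * n./2)%N.
Proof.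
move=> ens; suff -> : (n * s = (s./2 * n + odd s * n./2).*2)%N by rewrite doubleK.
have En := odd_double_half n; have Es := odd_double_half s.
move: ens En Es; rewrite oddM -!muln2.
by case: (odd n); case: (odd s) => //= _; nia.
Qed.

Lemma pboolP (P : Prop) : reflect P (pbool P).
Proof. by rewrite /pbool; case: excluded_middle_informative => h; constructor. Qed.

Section CyclotomicClasses.
Variables (F : finFieldType) (gamma : F) (n : nat).
Hypotheses (gamma_prim : #|F|.-1.-primitive_root gamma) (n_gt0 : (0 < n)%N).
Hypothesis (n_dvd : (n %| #|F|.-1)%N).

Local Notation N := #|F|.-1.
Local Notation s := (N %/ n)%N.
Local Notation A := (Ak gamma n).

Lemma expr_gamma_neq0 e : gamma ^+ e != 0.
Proof.
apply/expf_neq0/eqP => gamma0; have := prim_expr_order gamma_prim.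
rewrite gamma0 expr0n gtn_eqF ?(prim_order_gt0 gamma_prim) // => /eqP.
by rewrite eq_sym oner_eq0.
Qed.

Lemma expf_pred_card (x : F) : x != 0 -> x ^+ N = 1.
Proof.
move=> x_neq0; apply: (mulfI x_neq0); rewrite mulr1 -exprS prednK ?expf_card //.
by apply/card_gt0P; exists 0.
Qed.

(* [dlog 0 = 0] is a junk value. *)
Definition dlog (x : F) : nat :=
  if [pick e : 'I_N | x == gamma ^+ e] is Some e then e else 0%N.

Lemma dlogK x : x != 0 -> gamma ^+ dlog x = x.
Proof.
move=> /expf_pred_card /(prim_rootP gamma_prim) [e Ee].
by rewrite /dlog; case: pickP => [e' /eqP -> //|/(_ e)]; rewrite Ee eqxx.
Qed.

Lemma dlog_mod x e : x = gamma ^+ e -> (dlog x %% n = e %% n)%N.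
Proof.
move=> Ex; have /eqP : gamma ^+ dlog x = gamma ^+ e by rewrite dlogK // Ex expr_gamma_neq0.
by rewrite (eq_prim_root_expr gamma_prim) => /eqP /(congr1 (modn^~ n)); rewrite !modn_dvdm.
Qed.

Lemma order_divnK : (n * s = N)%N.
Proof. by rewrite mulnC divnK. Qed.

Lemma memA1P x : reflect (exists e, x = gamma ^+ (n * e)) (x \in A1 gamma n).
Proof.
rewrite inE; apply: (iffP (pboolP _)) => [[t ->]|[e ->]]; last by exists e; rewrite -PoszM.
case: t => k; first by exists k; rewrite -PoszM.
exists (k.+1 * N.-1)%N; rewrite NegzE mulrN -PoszM -invr_expz.
apply: (mulIf (expr_gamma_neq0 (n * k.+1))); rewrite mulVf ?expr_gamma_neq0 //.
rewrite -exprD -mulnDr -mulnSr prednK ?(prim_order_gt0 gamma_prim) // mulnA [(_ * N)%N]mulnC.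
by rewrite exprM (prim_expr_order gamma_prim) expr1n.
Qed.

Lemma memAk k x : (1 <= k <= n)%N ->
  (x \in A k) = (x != 0) && (dlog x %% n == k.-1)%N.
Proof.
case/andP=> k_gt0 le_kn; have lt_kn : (k.-1 < n)%N by rewrite prednK.
apply/imsetP/andP => [[a /memA1P [e ->] ->]|[x_neq0 /eqP Ex]].
  rewrite -exprD expr_gamma_neq0 (@dlog_mod _ _ erefl).
  by rewrite addnC mulnC modnMDl modn_small.
exists (gamma ^+ (n * (dlog x %/ n))); first by apply/memA1P; exists (dlog x %/ n)%N.
by rewrite -exprD -Ex mulnC addnC -divn_eq dlogK.
Qed.

Lemma card_A1 : #|A1 gamma n| = s.
Proof.
have lt_ns u : (u < s)%N -> (n * u < N)%N.
  by move=> lt_us; rewrite -order_divnK ltn_pmul2l.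
have -> : A1 gamma n = [set gamma ^+ (n * u) | u : 'I_s].
  apply/setP => x; apply/memA1P/imsetP => [[e ->]|[u _ ->]]; last by exists u.
  have s_gt0 : (0 < s)%N by rewrite divn_gt0 // dvdn_leq ?(prim_order_gt0 gamma_prim).
  exists (Ordinal (ltn_pmod e s_gt0)) => //=.
  rewrite {1}(divn_eq e s) mulnDr exprD mulnA mulnAC order_divnK.
  by rewrite exprM (prim_expr_order gamma_prim) expr1n mul1r.
rewrite card_imset ?card_ord // => u v /eqP; rewrite (eq_prim_root_expr gamma_prim).
by rewrite !modn_small ?lt_ns // eqn_pmul2l // => /eqP /val_inj.
Qed.

Lemma card_Ak k : #|A k| = s.
Proof. by rewrite card_imset ?card_A1 //; apply/mulfI/expr_gamma_neq0. Qed.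

Lemma sum_over_classes (V : nmodType) (f : F -> V) :
  \sum_x f x = f 0 + \sum_(1 <= k < n.+1) \sum_(x in A k) f x.
Proof.
pose cls x : 'I_n.+1 := inord (if x == 0 then 0 else (dlog x %% n).+1).
have clsE x : (cls x : nat) = if x == 0 then 0%N else (dlog x %% n).+1.
  by rewrite inordK //; case: (x == 0) => //; rewrite ltnS ltn_mod.
rewrite (partition_big cls predT) //= big_ord_recl; congr (_ + _).
  by apply: big_pred1 => x /=; rewrite -val_eqE /= clsE; case: (x == 0).
rewrite big_add1 /= big_mkord; apply: eq_bigr => k _.
apply: eq_bigl => x; rewrite memAk /= ?ltn_ord // -val_eqE /= clsE /bump /= add1n.
by case: (x == 0).
Qed.

Lemma memAk_mulA1 k u y : (1 <= k <= n)%N -> u \in A1 gamma n ->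
  (u * y \in A k) = (y \in A k).
Proof.
move=> k_range /memA1P [e ->]; rewrite !memAk //.
have [->|y_neq0] := eqVneq y 0; first by rewrite mulr0 eqxx.
rewrite mulf_neq0 ?expr_gamma_neq0 // (@dlog_mod _ (n * e + dlog y)).
  by rewrite mulnC modnMDl.
by rewrite exprD dlogK.
Qed.

Definition nreps i j (x : F) : nat := #|[set a in A i | x - a \in A j]|.

Lemma nreps_mulA1 i j u x : (1 <= i <= n)%N -> (1 <= j <= n)%N ->
  u \in A1 gamma n -> nreps i j (u * x) = nreps i j x.
Proof.
move=> i_range j_range uA1; have u_neq0 : u != 0.
  by case/memA1P: uA1 => e ->; apply: expr_gamma_neq0.
rewrite /nreps -(card_preimset _ (mulfI u_neq0)); apply: eq_card => a.
by rewrite !inE -mulrBr !memAk_mulA1.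
Qed.

Lemma nreps_class i j k x : (1 <= i <= n)%N -> (1 <= j <= n)%N ->
  x \in A k -> nreps i j x = nreps i j (gamma ^+ k.-1).
Proof. by move=> i_range j_range /imsetP [u uA1 ->]; rewrite mulrC nreps_mulA1. Qed.

Lemma sum_Ak_pairs (V : nmodType) (f : F -> V) i j :
  (1 <= i <= n)%N -> (1 <= j <= n)%N ->
  \sum_(a in A i) \sum_(b in A j) f (a + b) =
  f 0 *+ nreps i j 0 + \sum_(1 <= k < n.+1) (\sum_(x in A k) f x) *+ nreps i j (gamma ^+ k.-1).
Proof.
move=> i_range j_range.
transitivity (\sum_x f x *+ nreps i j x).
  transitivity (\sum_(a in A i) \sum_x (if x - a \in A j then f x else 0)).
    apply: eq_bigr => a _; rewrite -big_mkcond /= (reindex (fun x => x - a)) /=.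
      by apply: eq_bigr => x _; rewrite addrC subrK.
    by exists (fun b => b + a) => b _; rewrite ?addrK ?subrK.
  rewrite exchange_big; apply: eq_bigr => x _ /=.
  by rewrite -big_mkcondr -sumr_const; apply: eq_bigl => a; rewrite inE.
rewrite sum_over_classes; congr (_ + _); apply: eq_big_nat => k /andP [k_gt0 lt_kn].
rewrite -sumrMnl; apply: eq_bigr => x xAk.
by rewrite (nreps_class i_range j_range xAk).
Qed.

Lemma opp1_odd_order : odd N -> -1 = 1 :> F.
Proof.
move=> odd_N; have := @expf_pred_card (-1).
by rewrite -signr_odd odd_N expr1 oppr_eq0 oner_eq0; apply.
Qed.

Lemma opp1_even_order : ~~ odd N -> -1 = gamma ^+ N./2.
Proof.
move=> even_N; have NE := even_halfK even_N.
have /eqP : (gamma ^+ N./2) ^+ 2 = 1 by rewrite -exprM muln2 NE (prim_expr_order gamma_prim).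
rewrite sqrf_eq1 => /orP [|/eqP //]; rewrite -(prim_order_dvd gamma_prim) => dvd_N.
have := prim_order_gt0 gamma_prim; rewrite -muln2 in NE.
by case: (posnP N./2) => [|/dvdn_leq/(_ dvd_N)]; lia.
Qed.

Lemma dlog_opp1 : (dlog (-1)%R %% n = if odd s && ~~ odd N then n./2 else 0)%N.
Proof.
have [odd_N|even_N] := boolP (odd N); rewrite ?andbF ?andbT.
  by rewrite (@dlog_mod _ 0) ?mod0n // (opp1_odd_order odd_N).
rewrite (dlog_mod (opp1_even_order even_N)) -order_divnK half_mulnE ?order_divnK //.
rewrite modnMDl; case: (odd s); rewrite ?mul0n ?mul1n ?mod0n // modn_small //.
by rewrite ltn_half_double -addnn; lia.
Qed.

Definition opp_class (i : nat) : nat := ((dlog (-1) + i.-1) %% n).+1.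

Lemma opp_class_range i : (1 <= opp_class i <= n)%N.
Proof. by rewrite ltn_mod. Qed.

Lemma memAk_opp i j a : (1 <= i <= n)%N -> (1 <= j <= n)%N -> a \in A i ->
  (- a \in A j) = (j == opp_class i).
Proof.
move=> i_range j_range; rewrite !memAk // oppr_eq0 => /andP [a_neq0 /eqP dlog_a].
rewrite a_neq0 /=.
rewrite (@dlog_mod _ (dlog (-1) + dlog a)); last first.
  by rewrite exprD !dlogK ?oppr_eq0 ?oner_eq0 // mulN1r.
by rewrite -modnDmr dlog_a; case: j j_range => // j _; rewrite eqSS eq_sym.
Qed.

Lemma nreps0 i j : (1 <= i <= n)%N -> (1 <= j <= n)%N ->
  nreps i j 0 = if j == opp_class i then s else 0%N.
Proof.
move=> i_range j_range; rewrite /nreps; case: ifP => [/eqP j_opp|j_neq].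
  rewrite -(card_Ak i); apply: eq_card => a; rewrite inE sub0r; apply: andb_idr => aAi.
  by rewrite (memAk_opp i_range j_range aAi) j_opp.
apply/eqP; rewrite cards_eq0; apply/eqP/setP => a; rewrite !inE sub0r.
by apply: negbTE; apply/andP => -[aAi]; rewrite (memAk_opp i_range j_range aAi) j_neq.
Qed.

Lemma nreps0_sym i : ~~ (odd s && ~~ odd N) -> (1 <= i <= n)%N ->
  nreps i i 0 = s /\ forall j, (1 <= j <= n)%N -> j != i -> nreps i j 0 = 0%N.
Proof.
move=> sym i_range; have opp_i : opp_class i = i.
  rewrite /opp_class -modnDml dlog_opp1 (negbTE sym) add0n.
  by case/andP: i_range => i_gt0 le_in; rewrite modn_small; lia.
by rewrite nreps0 // opp_i eqxx; split=> // j j_range ji; rewrite nreps0 // opp_i (negbTE ji).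
Qed.

Lemma nreps0_skew i : odd s -> ~~ odd N -> (1 <= i <= n)%N ->
  nreps i i 0 = 0%N /\ exists2 j, (1 <= j <= n)%N & j != i /\ nreps i j 0 = s.
Proof.
move=> odd_s even_N i_range.
have opp_i : opp_class i != i.
  rewrite /opp_class -modnDml dlog_opp1 odd_s even_N /=.
  move: even_N; rewrite -order_divnK oddM odd_s andbT => /even_halfK.
  rewrite -muln2 => n_even; case/andP: i_range => i_gt0 le_in.
  case: (ltnP (n./2 + i.-1) n) => [lt_n|le_n]; first by rewrite modn_small //; lia.
  by rewrite -(subnK le_n) modnDr modn_small; lia.
split; first by rewrite nreps0 // eq_sym (negbTE opp_i).
by exists (opp_class i); rewrite ?opp_class_range ?nreps0 ?opp_class_range ?eqxx.
Qed.

End CyclotomicClasses.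

Section Subalgebra.
Variables (F : finFieldType) (p m : nat) (gamma : F) (n : nat).
Hypotheses (chF : p \in [pchar F]) (cardF : #|F| = (p ^ m)%N).
Hypotheses (gamma_prim : #|F|.-1.-primitive_root gamma) (order_gt1 : (1 < #|F|.-1)%N).
Hypotheses (n_gt0 : (0 < n)%N) (n_dvd : (n %| #|F|.-1)%N).

Local Notation q := (q p m gamma n).
Local Notation monom := (monom p m gamma).
Local Notation nreps := (nreps gamma n).

Lemma qE k : (0 < k)%N -> q k = \sum_(x in Ak gamma n k) monom x.
Proof. by case: k. Qed.

Lemma qM i j : (1 <= i <= n)%N -> (1 <= j <= n)%N ->
  eqmodI p (q i * q j)
    ((nreps i j 0)%:R + \sum_(1 <= k < n.+1) (nreps i j (gamma ^+ k.-1))%:R *: q k).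
Proof.
move=> i_range j_range; have [[i_gt0 _] [j_gt0 _]] := (andP i_range, andP j_range).
rewrite !qE // mulr_suml.
apply: eqmodI_trans (_ : eqmodI p _ (\sum_(a in _) \sum_(b in _) monom (a + b))) _.
  by apply: eqmodI_sum => a _; rewrite mulr_sumr; apply: eqmodI_sum => b _; apply: monomD.
rewrite sum_Ak_pairs // (monom0 chF cardF gamma_prim order_gt1).
apply: eqmodI_eq; congr (_ + _).
by apply: eq_big_nat => k /andP [k_gt0 _]; rewrite qE // scaler_nat.
Qed.

Local Notation V := (@inV F p m gamma n).

Lemma inV_eqmodI f g : eqmodI p f g -> V g -> V f.
Proof. by move=> Efg [a Ea]; exists a; apply: eqmodI_trans Efg Ea. Qed.

Lemma inV0 : V 0.
Proof. by exists (fun=> 0); apply: eqmodI_eq; rewrite big1 // => k _; rewrite scale0r. Qed.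

Lemma inVD f g : V f -> V g -> V (f + g).
Proof.
case=> a Ea [b Eb]; exists (fun k => a k + b k).
under eq_bigr do rewrite scalerDl.
by rewrite big_split; apply: eqmodID.
Qed.

Lemma inVZ c f : V f -> V (c *: f).
Proof.
case=> a Ea; exists (fun k => c * a k).
under eq_bigr do rewrite -scalerA.
by rewrite -scaler_sumr; apply: eqmodIZ.
Qed.

Lemma inV_sum (I : Type) (r : seq I) (P : pred I) (f : I -> {mpoly rat[m]}) :
  (forall i, P i -> V (f i)) -> V (\sum_(i <- r | P i) f i).
Proof. by move=> Vf; apply: big_ind => //; [apply: inV0 | apply: inVD]. Qed.

Lemma inV_q k : (k <= n)%N -> V (q k).
Proof.
move=> le_kn; exists (fun l => (l == k)%:R); apply: eqmodI_eq.
rewrite (bigD1 (Ordinal (le_kn : k < n.+1)%N)) //= eqxx scale1r big1 ?addr0 // => l.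
by rewrite -val_eqE /= => /negbTE ->; rewrite scale0r.
Qed.

Lemma inV1 : V 1.
Proof. exact: (@inV_q 0). Qed.

Lemma inV_qM k l : (k <= n)%N -> (l <= n)%N -> V (q k * q l).
Proof.
case: k => [|k] le_kn; first by rewrite mul1r; apply: inV_q.
case: l => [|l] le_ln; first by rewrite mulr1; apply: inV_q.
apply: inV_eqmodI (qM _ _) _ => //; apply: inVD.
  by rewrite -scaler_nat; apply/inVZ/inV1.
rewrite big_seq; apply: inV_sum => k'; rewrite mem_index_iota => /andP [_ lt_k'n].
exact/inVZ/inV_q.
Qed.

Lemma inVM f g : V f -> V g -> V (f * g).
Proof.
case=> a Ea [b Eb]; apply: inV_eqmodI (eqmodIM Ea Eb) _.
rewrite mulr_suml; apply: inV_sum => k _; rewrite mulr_sumr; apply: inV_sum => l _.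
by rewrite -scalerAl -scalerAr; apply/inVZ/inVZ/inV_qM; rewrite -ltnS.
Qed.

End Subalgebra.

Lemma odd_pred_expn p m : (0 < p)%N -> (0 < m)%N -> odd (p ^ m).-1 = ~~ odd p.
Proof.
move=> p_gt0 m_gt0; rewrite -[odd _]negbK -oddS prednK ?expn_gt0 ?p_gt0 //.
by rewrite oddX eqn0Ngt m_gt0.
Qed.

Theorem theorem1 (F : finFieldType) (p m : nat) (gamma : F) (n : nat)
  (hp : prime p) (hm : (1 <= m)%N) (hm2 : p = 2%N -> (2 <= m)%N)
  (hF : #|F| = (p ^ m)%N)
  (hgamma : (p ^ m).-1.-primitive_root gamma)
  (hn : (2 <= n)%N) (hnd : (n %| (p ^ m).-1)%N) :
  let s := ((p ^ m).-1 %/ n)%N in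
  (* V_{n+1} is a Q-subalgebra of R (closed under multiplication in R) *)
  (inV p gamma n (1 : {mpoly rat[m]}) /\
   forall f g : {mpoly rat[m]}, inV p gamma n f -> inV p gamma n g ->
     inV p gamma n (f * g)) /\
  exists c : nat -> nat -> nat -> int,
    (forall i j, (1 <= i <= n)%N -> (1 <= j <= n)%N ->
       eqmodI p (q p m gamma n i * q p m gamma n j)
         ((c i j 0%N)%:~R + \sum_(1 <= k < n.+1) ((c i j k)%:~R : rat) *: q p m gamma n k)) /\
    (odd p -> ~~ odd s -> forall i, (1 <= i <= n)%N ->
       c i i 0%N = s%:Z /\
       forall j, (1 <= j <= n)%N -> j != i -> c i j 0%N = 0) /\
    (odd p -> odd s -> forall i, (1 <= i <= n)%N ->
       c i i 0%N = 0 /\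
       exists j, [/\ (1 <= j <= n)%N, j != i & c i j 0%N = s%:Z]) /\
    (p = 2%N -> odd s /\ forall i, (1 <= i <= n)%N ->
       c i i 0%N = s%:Z /\
       forall j, (1 <= j <= n)%N -> j != i -> c i j 0%N = 0).
Proof.
have chF := card_finPcharP hF hp.
have n_gt0 : (0 < n)%N by apply: leq_trans hn.
have order_gt1 : (1 < (p ^ m).-1)%N.
  by apply: leq_trans hn (dvdn_leq (prim_order_gt0 hgamma) hnd).
have odd_N := odd_pred_expn (prime_gt0 hp) hm.
rewrite -hF in hgamma hnd order_gt1 odd_N *; move=> s.
split; first by split=> [|f g]; [apply: inV1 | apply: inVM].
exists (fun i j k => (nreps gamma n i j (if k == 0%N then 0 else gamma ^+ k.-1))%:Z).
split.
  move=> i j i_range j_range.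
  apply: eqmodI_trans (qM chF hF hgamma order_gt1 n_gt0 hnd i_range j_range) _.
  apply: eqmodI_eq; congr (_ + _); apply: eq_big_nat => k /andP [k_gt0 _].
  by rewrite gtn_eqF.
split; [|split].
- move=> odd_p even_s i i_range /=.
  have sym : ~~ (odd s && ~~ odd #|F|.-1) by rewrite (negbTE even_s).
  have [-> nreps0_ji] := nreps0_sym hgamma n_gt0 hnd sym i_range.
  by split=> // j j_range ji; rewrite nreps0_ji.
- move=> odd_p odd_s i i_range /=.
  have even_N : ~~ odd #|F|.-1 by rewrite odd_N odd_p.
  have [-> [j j_range [ji nreps0_ij]]] := nreps0_skew hgamma n_gt0 hnd odd_s even_N i_range.
  by split=> //; exists j; rewrite /= nreps0_ij.
move=> p2; have odd_s : odd s.
  by move: (odd_N); rewrite p2 -(order_divnK hnd) oddM => /andP [].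
split=> // i i_range /=.
have sym : ~~ (odd s && ~~ odd #|F|.-1) by rewrite odd_N p2 andbF.
have [-> nreps0_ji] := nreps0_sym hgamma n_gt0 hnd sym i_range.
by split=> // j j_range ji; rewrite nreps0_ji.
Qed.
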